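(* Let $n\ge2$ be an integer and let $w>0$ be fixed. For $\alpha>0$ let $\overline{G}_\alpha(x)=\int_x^\infty\frac{1}{\Gamma(\alpha)}e^{-t}t^{\alpha-1}\,dt$, $x\ge0$. For $\mu\ge0$ define $$I_1(\mu)=\int_0^{\mu/n}ue^{2nu}\overline{G}_{2n}\!\left(\frac{u(1+nw)}{w}\right)du,\qquad I_2(\mu)=\int_0^{\mu/n}e^{2nu}\overline{G}_{2n+1}\!\left(\frac{u(1+nw)}{w}\right)du,$$ $$I_3(\mu)=\frac{\mu}{1+nI_2(\mu)},\qquad I_4(\mu)=\frac{I_1(\mu)}{1+nI_2(\mu)},\qquad k(\mu)=\frac{1+\mu-2n^2I_1(\mu)}{1+nI_2(\mu)}.$$ Then: (i) $\lim_{\mu\to\infty}I_1(\mu)=\left(\frac{1+nw}{1-nw}\right)^{2n}\left[\frac{w}{1-nw}-\frac{1}{4n^2}\right]+\frac{1}{4n^2}$ if $0<w<\frac1n$, and $=\infty$ if $w\ge\frac1n$; (ii) $\lim_{\mu\to\infty}I_2(\mu)=\frac{1}{2n}\left[\left(\frac{1+nw}{1-nw}\right)^{2n+1}-1\right]$ if $0<w<\frac1n$, and $=\infty$ if $w\ge\frac1n$; (iii) $\lim_{\mu\to\infty}I_3(\mu)=\infty$ if $0<w<\frac1n$, and $=0$ if $w\ge\frac1n$; (iv) $\lim_{\mu\to\infty}I_4(\mu)=\dfrac{\lim_{\mu\to\infty}I_1(\mu)}{1+n\lim_{\mu\to\infty}I_2(\mu)}$ if $0<w<\frac1n$, and $=\frac{2w}{1+nw}$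 if $w\ge\frac1n$; (v) $\lim_{\mu\to\infty}k(\mu)=\infty$ if $0<w<\frac1n$, and $=-\frac{4n^2w}{1+nw}$ if $w\ge\frac1n$; (vi) $\sup_{\mu\ge0}k(\mu)=\infty$ if $0<w<\frac1n$, and $=1$ if $w\ge\frac1n$; (vii) if $w\ge\frac1n$ then $\inf_{\mu\ge0}k(\mu)=-\frac{4n^2w}{1+nw}$; and for every $w>0$, $\inf_{\mu\ge0}k(\mu)\ge-\frac{4n^2w}{1+nw}$.
   Context: $\Gamma$ denotes the gamma function, so $\overline{G}_\alpha$ is the survival function of the Gamma$(\alpha,1)$ distribution. *)

From Stdlib Require Import Reals.
From Coquelicot Require Import Coquelicot.
Open Scope R_scope.

(* Gamma density numerator e^{-t} t^{a-1}; only evaluated at t > 0. *)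
Definition gdens (a t : R) : R := exp (- t) * Rpower t (a - 1).

Definition Gamma (a : R) : R :=
  RInt_gen (gdens a) (at_right 0) (Rbar_locally p_infty).

Definition Gbar (a x : R) : R :=
  RInt_gen (gdens a) (at_right x) (Rbar_locally p_infty) / Gamma a.

Definition I1 (n : nat) (w mu : R) : R :=
  RInt (fun u => u * exp (2 * INR n * u) *
                 Gbar (2 * INR n) (u * (1 + INR n * w) / w)) 0 (mu / INR n).

Definition I2 (n : nat) (w mu : R) : R :=
  RInt (fun u => exp (2 * INR n * u) *
                 Gbar (2 * INR n + 1) (u * (1 + INR n * w) / w)) 0 (mu / INR n).

Definition I3 (n : nat) (w mu : R) : R := mu / (1 + INR n * I2 n w mu).

Definition I4 (n : nat) (w mu : R) : R := I1 n w mu / (1 + INR n * I2 n w mu).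

Definition kfun (n : nat) (w mu : R) : R :=
  (1 + mu - 2 * (INR n) ^ 2 * I1 n w mu) / (1 + INR n * I2 n w mu).

Definition I1lim (n : nat) (w : R) : R :=
  ((1 + INR n * w) / (1 - INR n * w)) ^ (2 * n)
    * (w / (1 - INR n * w) - 1 / (4 * (INR n) ^ 2))
  + 1 / (4 * (INR n) ^ 2).

Definition I2lim (n : nat) (w : R) : R :=
  1 / (2 * INR n) * (((1 + INR n * w) / (1 - INR n * w)) ^ (2 * n + 1) - 1).

(* For integer shape, Gbar (k + 1) x = e^(-x) Q_(k+1)(x), where Q_m = exp_trunc m is the
   truncated exponential series y |-> sum_(j<m) y^j/j!.  With c = (1 + n w)/w and
   d = c - 2n = (1 - n w)/w, the substitution turns I2 and I1 into integrals over [0, mu/n]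
   of e^(-d u) Q_(2n+1)(c u) and u e^(-d u) Q_(2n)(c u).

   If w < 1/n then d > 0: both integrands have explicit primitives tending to 0 at infinity,
   and their values at 0 are the finite sums that give the closed forms.  If w >= 1/n then
   d <= 0: the integrand of I2 is at least 1 + c u, so I2 grows quadratically in mu.  The
   identity m Q_(m+1)(y) - y Q_m(y) = sum_(k<m) (m-k) y^k/k!, which lies in [0, m Q_m(y)],
   gives 0 <= (2n/c) I2 - I1 <= (2n/c) J with J the analogue of I2 built on Q_(2n); since
   Q_(2n) = o(Q_(2n+1)) at infinity, J = o(I2), hence I1 ~ (2n/c) I2.  The left inequality
   holds for every w and is exactly the lower bound on k. *)

From Stdlib Require Import Reals Lra Lia Psatz Factorial.
From Coquelicot Require Import Coquelicot.
Open Scope R_scope.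

Lemma is_lim_div_id (a : R) : is_lim (fun t => a / t) p_infty 0.
Proof.
  replace (Finite 0) with (Rbar_mult a 0) by (simpl; f_equal; ring).
  apply (is_lim_scal_l (fun t => / t)).
  apply (is_lim_inv (fun t => t) p_infty p_infty); [apply is_lim_id | discriminate].
Qed.

Lemma is_lim_scal_id_p_infty a : 0 < a -> is_lim (fun x => a * x) p_infty p_infty.
Proof.
  intros Ha. replace p_infty with (Rbar_mult a p_infty) at 2.
  - apply is_lim_scal_l, is_lim_id.
  - rewrite Rbar_mult_comm. apply is_Rbar_mult_unique, is_Rbar_mult_p_infty_pos. exact Ha.
Qed.

Lemma is_lim_comp_scal f a l : is_lim f p_infty l -> 0 < a ->
  is_lim (fun x => f (a * x)) p_infty l.
Proof.
  intros Hf Ha. apply (is_lim_comp f (fun x => a * x) p_infty l p_infty);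
    [exact Hf | apply is_lim_scal_id_p_infty; exact Ha | exists 0; intros; discriminate].
Qed.

Lemma is_lim_comp_div f a l : is_lim f p_infty l -> 0 < a ->
  is_lim (fun x => f (x / a)) p_infty l.
Proof.
  intros Hf Ha. apply (is_lim_ext (fun x => f (/ a * x))).
  - intros x. unfold Rdiv. rewrite Rmult_comm. reflexivity.
  - apply is_lim_comp_scal; [exact Hf | apply Rinv_0_lt_compat, Ha].
Qed.

Lemma is_lim_mult_p_infty_pos f g l : is_lim f p_infty p_infty ->
  is_lim g p_infty (Finite l) -> 0 < l -> is_lim (fun x => f x * g x) p_infty p_infty.
Proof.
  intros Hf Hg Hl. replace p_infty with (Rbar_mult p_infty l) at 2.
  - apply is_lim_mult; [exact Hf | exact Hg | simpl; lra].
  - apply is_Rbar_mult_unique, is_Rbar_mult_p_infty_pos. exact Hl.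
Qed.

Lemma is_lim_inv_1_plus f k l : is_lim f p_infty (Finite l) -> 1 + k * l <> 0 ->
  is_lim (fun x => / (1 + k * f x)) p_infty (/ (1 + k * l)).
Proof.
  intros Hf Hne. apply (is_lim_inv (fun x => 1 + k * f x) p_infty (1 + k * l)).
  - apply is_lim_plus'; [apply is_lim_const | apply (is_lim_scal_l f k p_infty l), Hf].
  - intros H. injection H. exact Hne.
Qed.

Lemma is_lim_div_1_plus (A B : R -> R) (a k : R) : 0 < k ->
  is_lim (fun x => A x / B x) p_infty a -> is_lim B p_infty p_infty ->
  is_lim (fun x => A x / (1 + k * B x)) p_infty (a / k).
Proof.
  intros Hk HAB HB.
  assert (HBpos : Rbar_locally p_infty (fun x => 0 < B x)).
  { apply is_lim_spec in HB. destruct (HB 0) as [N HN]. exists N. exact HN. }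
  apply (is_lim_ext_loc (fun x => A x / B x * / (k + / B x))).
  - destruct HBpos as [N HN]. exists N. intros x Hx. specialize (HN x Hx).
    assert (0 < / B x) by (apply Rinv_0_lt_compat, HN).
    field. repeat split; apply Rgt_not_eq; nra.
  - apply (is_lim_mult _ _ _ a (/ k)); [exact HAB | | simpl; exact I].
    replace (Finite (/ k)) with (Rbar_inv (k + 0)) by (simpl; rewrite Rplus_0_r; reflexivity).
    apply (is_lim_inv (fun x => k + / B x)).
    + apply is_lim_plus'; [apply is_lim_const|].
      apply (is_lim_inv B p_infty p_infty HB). discriminate.
    + simpl. intros H. injection H. lra.
Qed.

Lemma is_lim_div_quadratic (D : R -> R) b : 0 < b ->
  (forall x, 1 <= x -> b * x ^ 2 <= D x) -> is_lim (fun x => (1 + x) / D x) p_infty 0.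
Proof.
  intros Hb HD. apply (is_lim_le_le_loc (fun _ => 0) (fun x => (2 / b) / x)).
  - exists 1. intros x Hx. specialize (HD x ltac:(lra)).
    assert (0 < b * x ^ 2) by (apply Rmult_lt_0_compat; [lra | apply pow_lt; lra]).
    assert (HDpos : 0 < D x) by lra.
    split; [apply Rdiv_le_0_compat; lra|].
    apply Rmult_le_reg_r with (D x * x); [nra|].
    replace ((1 + x) / D x * (D x * x)) with ((1 + x) * x) by (field; lra).
    replace (2 / b / x * (D x * x)) with (2 / b * D x) by (field; lra).
    assert (Hquad : 2 * x ^ 2 <= 2 / b * D x).
    { replace (2 * x ^ 2) with (2 / b * (b * x ^ 2)) by (field; lra).
      apply Rmult_le_compat_l; [apply Rlt_le, Rdiv_lt_0_compat; lra | exact HD]. }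
    nra.
  - apply is_lim_const.
  - apply is_lim_div_id.
Qed.

Section ImageOfHalfLine.

Variable f : R -> R.
Let image := fun y => exists x, 0 <= x /\ y = f x.

Lemma Lub_Rbar_image_p_infty : is_lim f p_infty p_infty -> Lub_Rbar image = p_infty.
Proof.
  intros Hf. apply is_lub_Rbar_unique. split; [intros x _; exact I|].
  intros b Hb. destruct b as [y | | ]; [| exact I |].
  - apply is_lim_spec in Hf. destruct (Hf y) as [N HN].
    set (x := Rmax N 0 + 1).
    assert (HxN : N < x) by (unfold x; pose proof (Rmax_l N 0); lra).
    assert (Hx0 : 0 <= x) by (unfold x; pose proof (Rmax_r N 0); lra).
    specialize (HN x HxN). specialize (Hb (f x) (ex_intro _ x (conj Hx0 eq_refl))).
    simpl in Hb. lra.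
  - exact (Hb (f 0) (ex_intro _ 0 (conj (Rle_refl 0) eq_refl))).
Qed.

Lemma Lub_Rbar_image_max : (forall x, 0 <= x -> f x <= f 0) -> Lub_Rbar image = Finite (f 0).
Proof.
  intros Hmax. apply is_lub_Rbar_unique. split.
  - intros y [x [Hx ->]]. apply Hmax, Hx.
  - intros b Hb. apply Hb. exists 0. split; [apply Rle_refl | reflexivity].
Qed.

Lemma Glb_Rbar_image_ge l : (forall x, 0 <= x -> l <= f x) -> Rbar_le l (Glb_Rbar image).
Proof.
  intros Hl. apply (Glb_Rbar_correct image). intros y [x [Hx ->]]. apply Hl, Hx.
Qed.

Lemma Glb_Rbar_image_lim l : (forall x, 0 <= x -> l <= f x) ->
  is_lim f p_infty (Finite l) -> Glb_Rbar image = Finite l.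
Proof.
  intros Hl Hf. apply is_glb_Rbar_unique. split.
  - intros y [x [Hx ->]]. apply Hl, Hx.
  - intros b Hb. destruct b as [y | | ]; simpl; [| | exact I].
    + apply Rnot_lt_le. intros Hlt. apply is_lim_spec in Hf.
      destruct (Hf (mkposreal (y - l) ltac:(lra))) as [N HN].
      set (x := Rmax N 0 + 1).
      assert (HxN : N < x) by (unfold x; pose proof (Rmax_l N 0); lra).
      assert (Hx0 : 0 <= x) by (unfold x; pose proof (Rmax_r N 0); lra).
      specialize (HN x HxN). simpl in HN. apply Rabs_lt_between in HN.
      specialize (Hb (f x) (ex_intro _ x (conj Hx0 eq_refl))). simpl in Hb. lra.
    + exact (Hb (f 0) (ex_intro _ 0 (conj (Rle_refl 0) eq_refl))).
Qed.

End ImageOfHalfLine.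

Lemma RInt_ext_nonneg (f g : R -> R) (M : R) : 0 <= M ->
  (forall u, 0 <= u -> f u = g u) -> RInt f 0 M = RInt g 0 M.
Proof.
  intros HM Hfg. apply RInt_ext. intros u [Hu _].
  rewrite Rmin_left in Hu by exact HM. apply Hfg. lra.
Qed.

Lemma RInt_lin_comb f g a b x y : ex_RInt f x y -> ex_RInt g x y ->
  RInt (fun u => a * f u - b * g u) x y = a * RInt f x y - b * RInt g x y.
Proof.
  intros Hf Hg.
  rewrite (RInt_minus (fun u => a * f u) (fun u => b * g u)).
  - rewrite (RInt_scal f), (RInt_scal g) by assumption. reflexivity.
  - apply (ex_RInt_scal f). exact Hf.
  - apply (ex_RInt_scal g). exact Hg.
Qed.

Lemma RInt_le_scal f g k a b : a <= b -> ex_RInt f a b -> ex_RInt g a b ->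
  (forall u, a < u < b -> g u <= k * f u) -> RInt g a b <= k * RInt f a b.
Proof.
  intros Hab Hf Hg Hgf.
  change (k * RInt f a b) with (scal k (RInt f a b)). rewrite <- (RInt_scal f a b k Hf).
  apply RInt_le; [exact Hab | exact Hg | apply (ex_RInt_scal f), Hf | exact Hgf].
Qed.

Lemma is_lim_RInt_ratio_0 (f g : R -> R) :
  (forall a b, ex_RInt f a b) -> (forall a b, ex_RInt g a b) ->
  (forall u, 0 <= u -> 0 <= f u) -> (forall u, 0 <= u -> 0 <= g u) ->
  (forall eps, 0 < eps -> exists U, 0 <= U /\ forall u, U <= u -> g u <= eps * f u) ->
  is_lim (fun M => RInt f 0 M) p_infty p_infty ->
  is_lim (fun M => RInt g 0 M / RInt f 0 M) p_infty 0.
Proof.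
  intros Hf Hg Hf0 Hg0 Hsmall Hlim.
  apply is_lim_spec. intros eps. pose proof (cond_pos eps) as He.
  destruct (Hsmall (eps / 2) ltac:(lra)) as [U [HU0 HU]].
  set (GU := RInt g 0 U).
  assert (HGU : 0 <= GU) by (apply RInt_ge_0; [exact HU0 | apply Hg | intros; apply Hg0; lra]).
  apply is_lim_spec in Hlim. destruct (Hlim (2 * GU / eps)) as [N HN].
  exists (Rmax N U). intros M HM.
  assert (HMN : N < M) by (eapply Rle_lt_trans; [apply Rmax_l | exact HM]).
  assert (HMU : U < M) by (eapply Rle_lt_trans; [apply Rmax_r | exact HM]).
  specialize (HN M HMN). set (F := RInt f 0 M) in *.
  assert (HF : 0 < F).
  { eapply Rle_lt_trans; [| exact HN]. apply Rdiv_le_0_compat; lra. }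
  assert (HGM : 0 <= RInt g 0 M)
    by (apply RInt_ge_0; [lra | apply Hg | intros; apply Hg0; lra]).
  assert (Hsplit : RInt g 0 M <= GU + eps / 2 * F).
  { assert (EG : RInt g 0 M = RInt g 0 U + RInt g U M)
      by (symmetry; apply (RInt_Chasles g); apply Hg).
    assert (EF : F = RInt f 0 U + RInt f U M)
      by (unfold F; symmetry; apply (RInt_Chasles f); apply Hf).
    assert (0 <= RInt f 0 U) by (apply RInt_ge_0; [exact HU0 | apply Hf | intros; apply Hf0; lra]).
    assert (RInt g U M <= eps / 2 * RInt f U M)
      by (apply RInt_le_scal; [lra | apply Hf | apply Hg | intros; apply HU; lra]).
    assert (0 <= eps / 2 * RInt f 0 U) by (apply Rmult_le_pos; lra).
    rewrite EG, EF. fold GU. lra. }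
  rewrite Rminus_0_r, Rabs_pos_eq by (apply Rdiv_le_0_compat; lra).
  assert (2 * GU < eps * F).
  { pose proof (Rmult_lt_compat_l eps _ _ He HN) as HepsN.
    replace (eps * (2 * GU / eps)) with (2 * GU) in HepsN by (field; lra). exact HepsN. }
  apply Rmult_lt_reg_r with F; [exact HF|].
  unfold Rdiv at 1. rewrite Rmult_assoc, Rinv_l by lra. nra.
Qed.

(** * The truncated exponential series *)

Fixpoint exp_trunc (m : nat) (y : R) : R :=
  match m with O => 0 | S p => exp_trunc p y + y ^ p / INR (fact p) end.

Lemma exp_trunc_term_nonneg k y : 0 <= y -> 0 <= y ^ k / INR (fact k).
Proof.
  intros Hy. apply Rdiv_le_0_compat; [apply pow_le; lra | apply INR_fact_lt_0].
Qed.

Lemma exp_trunc_mono m1 m2 y : (m1 <= m2)%nat -> 0 <= y -> exp_trunc m1 y <= exp_trunc m2 y.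
Proof.
  intros Hm Hy. induction Hm as [|m _ IH]; [lra|].
  simpl. pose proof (exp_trunc_term_nonneg m y Hy). lra.
Qed.

Lemma exp_trunc_nonneg m y : 0 <= y -> 0 <= exp_trunc m y.
Proof. intros Hy. apply (exp_trunc_mono 0); [lia | exact Hy]. Qed.

Lemma exp_trunc_ge_affine m y : (2 <= m)%nat -> 0 <= y -> 1 + y <= exp_trunc m y.
Proof.
  intros Hm Hy. replace (1 + y) with (exp_trunc 2 y) by (simpl; field).
  apply exp_trunc_mono; assumption.
Qed.

Lemma exp_trunc_term_le k y : 0 <= y -> y ^ k / INR (fact k) <= exp_trunc (S k) y.
Proof. intros Hy. simpl. pose proof (exp_trunc_nonneg k y Hy). lra. Qed.

Lemma exp_trunc_le_exp m y : 0 <= y -> exp_trunc m y <= exp y.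
Proof.
  intros Hy. destruct m as [|m].
  - simpl. pose proof (exp_pos y). lra.
  - replace (exp_trunc (S m) y) with (sum_f_R0 (fun k => y ^ k / INR (fact k)) m).
    + apply exp_ge_taylor; exact Hy.
    + induction m as [|m IH]; simpl in *; [field | rewrite IH; reflexivity].
Qed.

Lemma exp_trunc_S_0 m : exp_trunc (S m) 0 = 1.
Proof.
  induction m as [|m IH]; simpl in *; [field|].
  rewrite IH. unfold Rdiv. ring.
Qed.

Lemma is_derive_exp_trunc m y : is_derive (exp_trunc (S m)) y (exp_trunc m y).
Proof.
  induction m as [|m IH].
  - apply (is_derive_ext (fun _ => 1)); [intros t; simpl; field|].
    apply (@is_derive_const R_AbsRing R_NormedModule).
  - apply (is_derive_plus (exp_trunc (S m)) (fun t => t ^ S m / INR (fact (S m))));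
      [exact IH|].
    apply (is_derive_ext (fun t => / INR (fact (S m)) * t ^ S m));
      [intros t; unfold Rdiv; apply Rmult_comm|].
    replace (y ^ m / INR (fact m)) with (/ INR (fact (S m)) * (INR (S m) * 1 * y ^ pred (S m))).
    + apply is_derive_scal, is_derive_pow, (@is_derive_id R_AbsRing).
    + simpl pred. rewrite fact_simpl, mult_INR.
      pose proof (INR_fact_lt_0 m). pose proof (pos_INR m). rewrite S_INR.
      field. lra.
Qed.

Lemma mult_exp_trunc_le m y : 1 <= y -> y * exp_trunc m y <= INR m * y ^ m.
Proof.
  intros Hy; induction m as [|m IH]; [simpl; lra|].
  change (exp_trunc (S m) y) with (exp_trunc m y + y ^ m / INR (fact m)).
  rewrite S_INR. change (y ^ S m) with (y * y ^ m).
  assert (Hpow : y ^ m <= y * y ^ m).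
  { assert (0 <= y ^ m) by (apply pow_le; lra). nra. }
  assert (Hterm : y * (y ^ m / INR (fact m)) <= y * y ^ m).
  { assert (1 <= INR (fact m)) by (apply (le_INR 1); pose proof (lt_O_fact m); lia).
    assert (0 <= y * y ^ m) by (apply Rmult_le_pos; [lra | apply pow_le; lra]).
    unfold Rdiv. rewrite <- Rmult_assoc.
    apply Rmult_le_reg_r with (INR (fact m)); [lra|].
    rewrite Rmult_assoc, Rinv_l by lra. nra. }
  pose proof (pos_INR m). nra.
Qed.

(* [m * exp_trunc (S m) y - y * exp_trunc m y = sum_(k<m) (m-k) y^k/k!]. *)
Lemma exp_trunc_shift_bounds m y : 0 <= y ->
  0 <= INR m * exp_trunc (S m) y - y * exp_trunc m y <= INR m * exp_trunc m y.
Proof.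
  intros Hy. induction m as [|m IH]; [simpl; lra|].
  assert (Hstep : y * (y ^ m / INR (fact m)) = INR (S m) * (y ^ S m / INR (fact (S m)))).
  { rewrite fact_simpl, mult_INR, S_INR. simpl pow.
    pose proof (INR_fact_lt_0 m). pose proof (pos_INR m). field. lra. }
  change (exp_trunc (S (S m)) y) with (exp_trunc (S m) y + y ^ S m / INR (fact (S m))).
  change (exp_trunc (S m) y) with (exp_trunc m y + y ^ m / INR (fact m)) at 2.
  pose proof (exp_trunc_term_le m y Hy). pose proof (exp_trunc_nonneg (S m) y Hy).
  pose proof (exp_trunc_term_nonneg m y Hy). rewrite S_INR in *.
  simpl exp_trunc in *. nra.
Qed.

Lemma exp_trunc_le_div m y : 1 <= y ->
  exp_trunc m y <= INR m * INR (fact m) / y * (y ^ m / INR (fact m)).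
Proof.
  intros Hy. pose proof (INR_fact_lt_0 m).
  apply Rmult_le_reg_l with y; [lra|].
  replace (y * (INR m * INR (fact m) / y * (y ^ m / INR (fact m)))) with (INR m * y ^ m)
    by (field; lra).
  apply mult_exp_trunc_le, Hy.
Qed.

Lemma exp_trunc_littleo m eps : 0 < eps ->
  exists Y, 0 <= Y /\ forall y, Y <= y -> exp_trunc m y <= eps * exp_trunc (S m) y.
Proof.
  intros He. exists (Rmax 1 (INR m * INR (fact m) / eps)).
  split; [pose proof (Rmax_l 1 (INR m * INR (fact m) / eps)); lra|].
  intros y Hy.
  assert (Hy1 : 1 <= y) by (eapply Rle_trans; [apply Rmax_l | exact Hy]).
  assert (Hy2 : INR m * INR (fact m) / eps <= y) by (eapply Rle_trans; [apply Rmax_r | exact Hy]).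
  assert (Hc : INR m * INR (fact m) / y <= eps).
  { pose proof (INR_fact_lt_0 m). pose proof (pos_INR m).
    apply Rmult_le_reg_r with (y / eps); [apply Rdiv_lt_0_compat; lra|].
    replace (INR m * INR (fact m) / y * (y / eps)) with (INR m * INR (fact m) / eps)
      by (field; lra).
    replace (eps * (y / eps)) with y by (field; lra). exact Hy2. }
  pose proof (exp_trunc_le_div m y Hy1).
  pose proof (exp_trunc_term_le m y ltac:(lra)).
  pose proof (exp_trunc_term_nonneg m y ltac:(lra)).
  nra.
Qed.

Lemma exp_neg_mult_exp_trunc_le m t : 1 <= t ->
  exp (- t) * exp_trunc m t <= INR m * INR (fact m) / t.
Proof.
  intros Ht.
  assert (Hinv : exp (- t) * exp t = 1) by (rewrite <- exp_plus, Rplus_opp_l; apply exp_0).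
  assert (Hterm : t ^ m / INR (fact m) <= exp t).
  { eapply Rle_trans; [apply exp_trunc_term_le | apply exp_trunc_le_exp]; lra. }
  pose proof (exp_trunc_le_div m t Ht). pose proof (exp_pos (- t)).
  pose proof (pos_INR m). pose proof (INR_fact_lt_0 m).
  assert (0 <= INR m * INR (fact m) / t) by (apply Rdiv_le_0_compat; [nra | lra]).
  apply Rle_trans with (exp (- t) * (INR m * INR (fact m) / t * exp t)).
  - apply Rmult_le_compat_l; [lra|].
    eapply Rle_trans; [eassumption | apply Rmult_le_compat_l; assumption].
  - replace (exp (- t) * (INR m * INR (fact m) / t * exp t))
      with (INR m * INR (fact m) / t * (exp (- t) * exp t)) by ring.
    rewrite Hinv. lra.
Qed.

Lemma is_lim_exp_neg_mult_exp_trunc m : is_lim (fun t => exp (- t) * exp_trunc m t) p_infty 0.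
Proof.
  apply (is_lim_le_le_loc (fun _ => 0) (fun t => INR m * INR (fact m) / t)).
  - exists 1. intros t Ht. split.
    + apply Rmult_le_pos; [apply Rlt_le, exp_pos | apply exp_trunc_nonneg; lra].
    + apply exp_neg_mult_exp_trunc_le; lra.
  - apply is_lim_const.
  - apply is_lim_div_id.
Qed.

(** * The gamma survival function at integer shape *)

Definition gamma_prim (k : nat) (t : R) : R :=
  - INR (fact k) * (exp (- t) * exp_trunc (S k) t).

Lemma is_derive_gamma_prim k t : is_derive (gamma_prim k) t (exp (- t) * t ^ k).
Proof.
  unfold gamma_prim.
  assert (Hd : is_derive (fun t => exp (- t) * exp_trunc (S k) t) t
                 (- exp (- t) * exp_trunc (S k) t + exp (- t) * exp_trunc k t)).
  { apply (is_derive_mult (fun t => exp (- t)) (exp_trunc (S k))).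
    - auto_derive; [exact I | ring].
    - apply is_derive_exp_trunc.
    - intros; apply Rmult_comm. }
  apply (is_derive_scal _ _ (- INR (fact k))) in Hd.
  replace (exp (- t) * t ^ k) with
    (- INR (fact k) * (- exp (- t) * exp_trunc (S k) t + exp (- t) * exp_trunc k t));
    [exact Hd|].
  change (exp_trunc (S k) t) with (exp_trunc k t + t ^ k / INR (fact k)).
  pose proof (INR_fact_lt_0 k). field. lra.
Qed.

Lemma is_lim_gamma_prim k : is_lim (gamma_prim k) p_infty 0.
Proof.
  replace (Finite 0) with (Rbar_mult (- INR (fact k)) 0) by (simpl; f_equal; ring).
  apply is_lim_scal_l, is_lim_exp_neg_mult_exp_trunc.
Qed.

Lemma gamma_prim_0 k : gamma_prim k 0 = - INR (fact k).
Proof. unfold gamma_prim. rewrite Ropp_0, exp_0, exp_trunc_S_0. ring. Qed.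

Lemma gdens_nat k t : 0 < t -> gdens (INR k + 1) t = exp (- t) * t ^ k.
Proof.
  intros Ht. unfold gdens. replace (INR k + 1 - 1) with (INR k) by ring.
  rewrite Rpower_pow; [reflexivity | exact Ht].
Qed.

Lemma is_RInt_gen_gdens_nat k x : 0 <= x ->
  is_RInt_gen (gdens (INR k + 1)) (at_right x) (Rbar_locally p_infty) (- gamma_prim k x).
Proof.
  intros Hx.
  apply (is_RInt_gen_ext (Derive (gamma_prim k))).
  - apply (Filter_prod _ _ _ (fun a => x < a) (fun b => x < b)).
    + unfold at_right, within. apply filter_forall. auto.
    + exists x. auto.
    + intros a b Ha Hb t [Ht _]. simpl in *.
      rewrite (is_derive_unique _ _ _ (is_derive_gamma_prim k t)).
      assert (x < Rmin a b) by (apply Rmin_glb_lt; assumption).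
      rewrite gdens_nat; [reflexivity | lra].
  - replace (- gamma_prim k x) with (0 - gamma_prim k x) by ring.
    apply is_RInt_gen_Derive.
    + apply filter_forall. intros ab t _. eexists. apply is_derive_gamma_prim.
    + apply filter_forall. intros ab t _.
      apply (continuous_ext (fun t => exp (- t) * t ^ k)).
      { intros; symmetry; apply is_derive_unique, is_derive_gamma_prim. }
      apply (@ex_derive_continuous R_AbsRing R_NormedModule). auto_derive. exact I.
    + eapply filterlim_filter_le_1;
        [apply (filter_le_within (F := locally x) (fun u => x < u))|].
      apply (@ex_derive_continuous R_AbsRing R_NormedModule).
      eexists. apply is_derive_gamma_prim.
    + apply is_lim_gamma_prim.
Qed.

Lemma Gbar_nat k x : 0 <= x -> Gbar (INR k + 1) x = exp (- x) * exp_trunc (S k) x.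
Proof.
  intros Hx. unfold Gbar, Gamma.
  rewrite (is_RInt_gen_unique _ _ (is_RInt_gen_gdens_nat k x Hx)).
  rewrite (is_RInt_gen_unique _ _ (is_RInt_gen_gdens_nat k 0 (Rle_refl 0))).
  rewrite gamma_prim_0. unfold gamma_prim.
  pose proof (INR_fact_lt_0 k). field. lra.
Qed.

(** * Integrals of [u^s e^(-d u) Q_m(c u)] *)

Definition exp_pow_prim (d : R) (j : nat) (u : R) : R := gamma_prim j (d * u) / d ^ S j.

Lemma is_derive_exp_pow_prim d j u : d <> 0 ->
  is_derive (exp_pow_prim d j) u (exp (- (d * u)) * u ^ j).
Proof.
  intros Hd. unfold exp_pow_prim.
  assert (Hcomp : is_derive (fun u => gamma_prim j (d * u)) u
                (d * (exp (- (d * u)) * (d * u) ^ j))).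
  { apply (is_derive_comp (gamma_prim j) (fun u => d * u));
      [apply is_derive_gamma_prim | auto_derive; [exact I | ring]]. }
  apply (is_derive_ext (fun u => / d ^ S j * gamma_prim j (d * u)));
    [intros t; unfold Rdiv; apply Rmult_comm|].
  replace (exp (- (d * u)) * u ^ j)
    with (/ d ^ S j * (d * (exp (- (d * u)) * (d * u) ^ j))).
  - apply is_derive_scal. exact Hcomp.
  - rewrite Rpow_mult_distr. simpl. field. split; [apply pow_nonzero|]; exact Hd.
Qed.

Lemma is_lim_exp_pow_prim d j : 0 < d -> is_lim (exp_pow_prim d j) p_infty 0.
Proof.
  intros Hd. unfold exp_pow_prim.
  apply (is_lim_ext (fun u => / d ^ S j * gamma_prim j (d * u)));
    [intros; unfold Rdiv; apply Rmult_comm|].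
  replace (Finite 0) with (Rbar_mult (/ d ^ S j) 0) by (simpl; f_equal; ring).
  apply is_lim_scal_l.
  apply is_lim_comp_scal; [apply is_lim_gamma_prim | exact Hd].
Qed.

Definition ker (c d : R) (s m : nat) (u : R) : R :=
  u ^ s * exp (- (d * u)) * exp_trunc m (c * u).

Fixpoint ker_prim (c d : R) (s m : nat) (u : R) : R :=
  match m with
  | O => 0
  | S p => ker_prim c d s p u + c ^ p / INR (fact p) * exp_pow_prim d (p + s) u
  end.

Lemma ker_S c d s m u :
  ker c d s (S m) u = ker c d s m u + c ^ m / INR (fact m) * (exp (- (d * u)) * u ^ (m + s)).
Proof.
  unfold ker. simpl exp_trunc. rewrite Rpow_mult_distr, pow_add.
  pose proof (INR_fact_lt_0 m). field. lra.
Qed.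

Lemma is_derive_ker_prim c d s m u : d <> 0 ->
  is_derive (ker_prim c d s m) u (ker c d s m u).
Proof.
  intros Hd. induction m as [|m IH].
  - replace (ker c d s 0 u) with 0 by (unfold ker; simpl; ring).
    apply (@is_derive_const R_AbsRing R_NormedModule).
  - rewrite ker_S.
    apply (is_derive_plus (ker_prim c d s m)
             (fun u => c ^ m / INR (fact m) * exp_pow_prim d (m + s) u)); [exact IH|].
    apply is_derive_scal, is_derive_exp_pow_prim. exact Hd.
Qed.

Lemma continuous_ker c d s m u : continuous (ker c d s m) u.
Proof.
  apply (continuous_mult (fun u => u ^ s * exp (- (d * u))) (fun u => exp_trunc m (c * u))).
  - apply (@ex_derive_continuous R_AbsRing R_NormedModule). auto_derive. exact I.
  - apply (continuous_comp (fun u => c * u) (exp_trunc m)).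
    + apply (@ex_derive_continuous R_AbsRing R_NormedModule). auto_derive. exact I.
    + apply (@ex_derive_continuous R_AbsRing R_NormedModule).
      destruct m as [|m].
      * apply (ex_derive_const (K := R_AbsRing) (V := R_NormedModule) 0).
      * eexists. apply is_derive_exp_trunc.
Qed.

Lemma ex_RInt_ker c d s m a b : ex_RInt (ker c d s m) a b.
Proof.
  apply (@ex_RInt_continuous R_CompleteNormedModule). intros; apply continuous_ker.
Qed.

Lemma RInt_ker c d s m a b : d <> 0 ->
  RInt (ker c d s m) a b = ker_prim c d s m b - ker_prim c d s m a.
Proof.
  intros Hd. apply is_RInt_unique, (is_RInt_derive (ker_prim c d s m)).
  - intros; apply is_derive_ker_prim; exact Hd.
  - intros; apply continuous_ker.
Qed.

Lemma is_lim_ker_prim c d s m : 0 < d -> is_lim (ker_prim c d s m) p_infty 0.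
Proof.
  intros Hd. induction m as [|m IH]; [apply (is_lim_const 0)|].
  replace (Finite 0) with (Finite (0 + c ^ m / INR (fact m) * 0)) by (f_equal; ring).
  apply is_lim_plus'; [exact IH|].
  apply (is_lim_scal_l (exp_pow_prim d (m + s)) _ p_infty 0), is_lim_exp_pow_prim.
  exact Hd.
Qed.

Lemma is_lim_RInt_ker c d s m : 0 < d ->
  is_lim (fun M => RInt (ker c d s m) 0 M) p_infty (- ker_prim c d s m 0).
Proof.
  intros Hd.
  apply (is_lim_ext (fun M => ker_prim c d s m M - ker_prim c d s m 0)).
  { intros M. symmetry. apply RInt_ker. lra. }
  replace (- ker_prim c d s m 0) with (0 - ker_prim c d s m 0) by ring.
  apply is_lim_minus'; [apply is_lim_ker_prim; exact Hd | apply is_lim_const].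
Qed.

Lemma exp_pow_prim_0 d j : d <> 0 -> exp_pow_prim d j 0 = - INR (fact j) / d ^ S j.
Proof. intros Hd. unfold exp_pow_prim. rewrite Rmult_0_r, gamma_prim_0. reflexivity. Qed.

(* [- ker_prim c d 0 m 0 = sum_(p<m) c^p / d^(p+1)], a geometric sum. *)
Lemma ker_prim_0_0 c d m : d <> 0 -> (c - d) * - ker_prim c d 0 m 0 = (c / d) ^ m - 1.
Proof.
  intros Hd. induction m as [|m IH]; [simpl; ring|].
  simpl ker_prim. rewrite exp_pow_prim_0, Nat.add_0_r by exact Hd.
  replace ((c - d) * - (ker_prim c d 0 m 0 + c ^ m / INR (fact m) * (- INR (fact m) / d ^ S m)))
    with ((c - d) * - ker_prim c d 0 m 0 + (c - d) * (c ^ m / d ^ S m)).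
  2:{ pose proof (INR_fact_lt_0 m). field. split; [apply pow_nonzero; exact Hd | lra]. }
  rewrite IH. simpl. unfold Rdiv. rewrite !Rpow_mult_distr, !pow_inv. field.
  split; [apply pow_nonzero; exact Hd | exact Hd].
Qed.

(* [- ker_prim c d 1 m 0 = sum_(p<m) (p+1) c^p / d^(p+2)]. *)
Lemma ker_prim_1_0 c d m : d <> 0 ->
  (c - d) ^ 2 * - ker_prim c d 1 m 0 = 1 - (INR m + 1) * (c / d) ^ m + INR m * (c / d) ^ S m.
Proof.
  intros Hd. induction m as [|m IH]; [simpl; ring|].
  simpl ker_prim. rewrite exp_pow_prim_0, Nat.add_1_r by exact Hd.
  replace ((c - d) ^ 2 * - (ker_prim c d 1 m 0
             + c ^ m / INR (fact m) * (- INR (fact (S m)) / d ^ S (S m))))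
    with ((c - d) ^ 2 * - ker_prim c d 1 m 0 + (c - d) ^ 2 * (INR (S m) * c ^ m / d ^ S (S m))).
  2:{ rewrite fact_simpl, mult_INR. pose proof (INR_fact_lt_0 m). field.
      split; [apply pow_nonzero; exact Hd | lra]. }
  rewrite IH, S_INR. simpl. unfold Rdiv. rewrite !Rpow_mult_distr, !pow_inv. field.
  split; [apply pow_nonzero; exact Hd | exact Hd].
Qed.

Lemma ker_nonneg c d s m u : 0 <= c -> 0 <= u -> 0 <= ker c d s m u.
Proof.
  intros Hc Hu. unfold ker.
  apply Rmult_le_pos; [apply Rmult_le_pos; [apply pow_le; exact Hu | apply Rlt_le, exp_pos]|].
  apply exp_trunc_nonneg. nra.
Qed.

Lemma RInt_ker_nonneg c d s m M : 0 <= c -> 0 <= M -> 0 <= RInt (ker c d s m) 0 M.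
Proof.
  intros Hc HM. apply RInt_ge_0; [exact HM | apply ex_RInt_ker|].
  intros u Hu. apply ker_nonneg; lra.
Qed.

Lemma ker_0_ge_affine c d m u : 0 <= c -> d <= 0 -> 0 <= u -> (2 <= m)%nat ->
  1 + c * u <= ker c d 0 m u.
Proof.
  intros Hc Hd Hu Hm. unfold ker. rewrite pow_O, Rmult_1_l.
  assert (1 <= exp (- (d * u))) by (pose proof (exp_ineq1_le (- (d * u))); nra).
  pose proof (exp_trunc_ge_affine m (c * u) Hm ltac:(nra)).
  assert (0 <= (exp (- (d * u)) - 1) * exp_trunc m (c * u))
    by (apply Rmult_le_pos; [lra | apply exp_trunc_nonneg; nra]).
  nra.
Qed.

Lemma RInt_ker_0_ge c d m M : 0 <= c -> d <= 0 -> 0 <= M -> (2 <= m)%nat ->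
  M + c * M ^ 2 / 2 <= RInt (ker c d 0 m) 0 M.
Proof.
  intros Hc Hd HM Hm.
  replace (M + c * M ^ 2 / 2) with (RInt (fun u => 1 + c * u) 0 M).
  - apply RInt_le; [exact HM | | apply ex_RInt_ker |].
    + apply (@ex_RInt_continuous R_CompleteNormedModule). intros.
      apply (@ex_derive_continuous R_AbsRing R_NormedModule). auto_derive. exact I.
    + intros u Hu. apply ker_0_ge_affine; [lra | lra | lra | exact Hm].
  - apply is_RInt_unique.
    replace (M + c * M ^ 2 / 2) with ((M + c * M ^ 2 / 2) - (0 + c * 0 ^ 2 / 2)) by field.
    apply (is_RInt_derive (fun u => u + c * u ^ 2 / 2)).
    + intros. auto_derive; [exact I | simpl; field].
    + intros. apply (@ex_derive_continuous R_AbsRing R_NormedModule). auto_derive. exact I.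
Qed.

Lemma RInt_ker_0_ge_id c d m M : 0 <= c -> d <= 0 -> 0 <= M -> (2 <= m)%nat ->
  M <= RInt (ker c d 0 m) 0 M.
Proof.
  intros Hc Hd HM Hm. pose proof (RInt_ker_0_ge c d m M Hc Hd HM Hm).
  assert (0 <= c * M ^ 2) by (apply Rmult_le_pos; [exact Hc | apply pow2_ge_0]).
  lra.
Qed.

Lemma ker_shift_bounds c d m u : 0 < c -> 0 <= u ->
  0 <= INR m / c * ker c d 0 (S m) u - ker c d 1 m u <= INR m / c * ker c d 0 m u.
Proof.
  intros Hc Hu. unfold ker. rewrite pow_O, pow_1.
  set (y := c * u). set (e := exp (- (d * u))).
  replace (INR m / c * (1 * e * exp_trunc (S m) y) - u * e * exp_trunc m y)
    with (e / c * (INR m * exp_trunc (S m) y - y * exp_trunc m y))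
    by (unfold y; field; apply Rgt_not_eq, Hc).
  replace (INR m / c * (1 * e * exp_trunc m y))
    with (e / c * (INR m * exp_trunc m y)) by (field; apply Rgt_not_eq, Hc).
  assert (0 < e / c) by (apply Rdiv_lt_0_compat; [apply exp_pos | exact Hc]).
  destruct (exp_trunc_shift_bounds m y ltac:(unfold y; nra)).
  split; [apply Rmult_le_pos; lra | apply Rmult_le_compat_l; lra].
Qed.

Lemma RInt_ker_shift_bounds c d m M : 0 < c -> 0 <= M ->
  0 <= INR m / c * RInt (ker c d 0 (S m)) 0 M - RInt (ker c d 1 m) 0 M
    <= INR m / c * RInt (ker c d 0 m) 0 M.
Proof.
  intros Hc HM.
  set (a := INR m / c).
  assert (Ediff : a * RInt (ker c d 0 (S m)) 0 M - RInt (ker c d 1 m) 0 M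
                  = RInt (fun u => a * ker c d 0 (S m) u - 1 * ker c d 1 m u) 0 M)
    by (rewrite RInt_lin_comb by apply ex_RInt_ker; ring).
  assert (Ebound : a * RInt (ker c d 0 m) 0 M
                   = RInt (fun u => a * ker c d 0 m u - 0 * ker c d 0 m u) 0 M)
    by (rewrite RInt_lin_comb by apply ex_RInt_ker; ring).
  rewrite Ediff, Ebound.
  assert (Hpt : forall u, 0 < u < M ->
            0 <= a * ker c d 0 (S m) u - 1 * ker c d 1 m u
              <= a * ker c d 0 m u - 0 * ker c d 0 m u).
  { intros u Hu. rewrite Rmult_1_l, Rmult_0_l, Rminus_0_r.
    apply ker_shift_bounds; [exact Hc | lra]. }
  assert (Hex : forall s1 s2 m1 m2 b1 b2,
            ex_RInt (fun u => b1 * ker c d s1 m1 u - b2 * ker c d s2 m2 u) 0 M).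
  { intros. apply (ex_RInt_minus (fun u => b1 * ker c d s1 m1 u) (fun u => b2 * ker c d s2 m2 u));
      apply (ex_RInt_scal (V := R_NormedModule)), ex_RInt_ker. }
  split.
  - apply RInt_ge_0; [exact HM | apply Hex | intros u Hu; apply Hpt, Hu].
  - apply RInt_le; [exact HM | apply Hex | apply Hex | intros u Hu; apply Hpt, Hu].
Qed.

Lemma ker_littleo c d m eps : 0 < c -> 0 < eps ->
  exists U, 0 <= U /\ forall u, U <= u -> ker c d 0 m u <= eps * ker c d 0 (S m) u.
Proof.
  intros Hc He. destruct (exp_trunc_littleo m eps He) as [Y [HY0 HY]].
  exists (Y / c). split; [apply Rdiv_le_0_compat; lra|].
  intros u Hu. unfold ker. rewrite pow_O, !Rmult_1_l.
  assert (Hcu : Y <= c * u).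
  { apply Rmult_le_compat_l with (r := c) in Hu; [|lra].
    replace (c * (Y / c)) with Y in Hu by (field; lra). exact Hu. }
  pose proof (HY _ Hcu). pose proof (exp_pos (- (d * u))). nra.
Qed.

Lemma is_lim_RInt_ker_0_p_infty c d m : 0 <= c -> d <= 0 -> (2 <= m)%nat ->
  is_lim (fun M => RInt (ker c d 0 m) 0 M) p_infty p_infty.
Proof.
  intros Hc Hd Hm. apply (is_lim_le_p_loc (fun M => M)); [|apply is_lim_id].
  exists 0. intros M HM. apply RInt_ker_0_ge_id; [exact Hc | exact Hd | lra | exact Hm].
Qed.

Lemma is_lim_RInt_ker_ratio c d m : 0 < c -> d <= 0 -> (1 <= m)%nat ->
  is_lim (fun M => RInt (ker c d 1 m) 0 M / RInt (ker c d 0 (S m)) 0 M) p_infty (INR m / c).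
Proof.
  intros Hc Hd Hm.
  set (A := fun M => RInt (ker c d 1 m) 0 M : R).
  set (B := fun M => RInt (ker c d 0 (S m)) 0 M : R).
  set (C := fun M => RInt (ker c d 0 m) 0 M : R).
  set (a := INR m / c).
  assert (HCB : is_lim (fun M => C M / B M) p_infty 0).
  { apply is_lim_RInt_ratio_0.
    - intros; apply ex_RInt_ker.
    - intros; apply ex_RInt_ker.
    - intros; apply ker_nonneg; lra.
    - intros; apply ker_nonneg; lra.
    - intros eps He. apply ker_littleo; assumption.
    - apply is_lim_RInt_ker_0_p_infty; [lra | exact Hd | lia]. }
  apply (is_lim_le_le_loc (fun M => a - a * (C M / B M)) (fun _ => a)).
  - exists 0. intros M HM.
    assert (HB : M <= B M)
      by exact (RInt_ker_0_ge_id c d (S m) M ltac:(lra) Hd ltac:(lra) ltac:(lia)).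
    assert (HBpos : 0 < B M) by lra.
    assert (Hsh : 0 <= a * B M - A M <= a * C M)
      by exact (RInt_ker_shift_bounds c d m M Hc ltac:(lra)).
    split; apply Rmult_le_reg_r with (B M); try exact HBpos.
    + replace ((a - a * (C M / B M)) * B M) with (a * B M - a * C M)
        by (field; apply Rgt_not_eq, HBpos).
      replace (A M / B M * B M) with (A M) by (field; apply Rgt_not_eq, HBpos). lra.
    + replace (A M / B M * B M) with (A M) by (field; apply Rgt_not_eq, HBpos). lra.
  - replace (Finite a) with (Finite (a - a * 0)) by (f_equal; ring).
    apply is_lim_minus'; [apply is_lim_const | apply (is_lim_scal_l _ a p_infty 0), HCB].
  - apply is_lim_const.
Qed.

(** * The integrals of the theorem *)

Definition cw (n : nat) (w : R) : R := (1 + INR n * w) / w.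
Definition dw (n : nat) (w : R) : R := (1 - INR n * w) / w.

Section Integrals.

Variables (n : nat) (w : R).
Hypotheses (Hn : (1 <= n)%nat) (Hw : 0 < w).

Lemma INR_n_pos : 0 < INR n.
Proof. apply lt_0_INR. lia. Qed.

Lemma one_plus_nw_pos : 0 < 1 + INR n * w.
Proof. pose proof (pos_INR n). nra. Qed.

Lemma cw_pos : 0 < cw n w.
Proof. unfold cw. pose proof (pos_INR n). apply Rdiv_lt_0_compat; nra. Qed.

Lemma cw_minus_dw : cw n w - dw n w = 2 * INR n.
Proof. unfold cw, dw. field. lra. Qed.

Lemma Gbar_cw (k : nat) (a u : R) : a = INR k + 1 -> 0 <= u ->
  exp (2 * INR n * u) * Gbar a (u * (1 + INR n * w) / w)
    = exp (- (dw n w * u)) * exp_trunc (S k) (cw n w * u).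
Proof.
  intros -> Hu.
  replace (u * (1 + INR n * w) / w) with (cw n w * u) by (unfold cw; field; lra).
  rewrite Gbar_nat by (pose proof cw_pos; nra).
  rewrite <- Rmult_assoc, <- exp_plus.
  replace (2 * INR n * u + - (cw n w * u)) with (- (dw n w * u))
    by (pose proof cw_minus_dw; nra).
  reflexivity.
Qed.

Lemma I1_eq mu : 0 <= mu ->
  I1 n w mu = RInt (ker (cw n w) (dw n w) 1 (2 * n)) 0 (mu / INR n).
Proof.
  intros Hmu. pose proof INR_n_pos. unfold I1.
  apply RInt_ext_nonneg; [apply Rdiv_le_0_compat; lra|]. intros u Hu.
  replace (2 * n)%nat with (S (2 * n - 1)) by lia.
  rewrite Rmult_assoc, (Gbar_cw (2 * n - 1)); [unfold ker; ring | | exact Hu].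
  rewrite minus_INR, mult_INR by lia. simpl. ring.
Qed.

Lemma I2_eq mu : 0 <= mu ->
  I2 n w mu = RInt (ker (cw n w) (dw n w) 0 (S (2 * n))) 0 (mu / INR n).
Proof.
  intros Hmu. pose proof INR_n_pos. unfold I2.
  apply RInt_ext_nonneg; [apply Rdiv_le_0_compat; lra|]. intros u Hu.
  rewrite (Gbar_cw (2 * n)); [unfold ker; ring | | exact Hu].
  rewrite mult_INR. simpl. ring.
Qed.

Lemma kfun_split mu :
  kfun n w mu = (1 + mu) / (1 + INR n * I2 n w mu) + - (2 * INR n ^ 2) * I4 n w mu.
Proof. unfold kfun, I4, Rdiv. ring. Qed.

Section SmallW.

Hypothesis Hsmall : w < 1 / INR n.

Lemma nw_lt_1 : INR n * w < 1.
Proof.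
  pose proof INR_n_pos as Hn0.
  apply Rmult_lt_compat_l with (r := INR n) in Hsmall; [|exact Hn0].
  replace (INR n * (1 / INR n)) with 1 in Hsmall by (field; lra). exact Hsmall.
Qed.

Lemma dw_pos : 0 < dw n w.
Proof. pose proof nw_lt_1. unfold dw. apply Rdiv_lt_0_compat; lra. Qed.

Lemma cw_div_dw : cw n w / dw n w = (1 + INR n * w) / (1 - INR n * w).
Proof. pose proof nw_lt_1. unfold cw, dw. field. lra. Qed.

Lemma I1lim_eq : I1lim n w = - ker_prim (cw n w) (dw n w) 1 (2 * n) 0.
Proof.
  pose proof INR_n_pos. pose proof nw_lt_1.
  pose proof (ker_prim_1_0 (cw n w) (dw n w) (2 * n) (Rgt_not_eq _ _ dw_pos)) as E.
  rewrite cw_minus_dw, cw_div_dw, mult_INR in E. simpl INR in E.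
  unfold I1lim. set (r := (1 + INR n * w) / (1 - INR n * w)) in *.
  change (r ^ S (2 * n)) with (r * r ^ (2 * n)) in E.
  apply Rmult_eq_reg_l with ((2 * INR n) ^ 2); [|apply pow_nonzero; lra].
  rewrite E. unfold r. field. lra.
Qed.

Lemma I2lim_eq : I2lim n w = - ker_prim (cw n w) (dw n w) 0 (S (2 * n)) 0.
Proof.
  pose proof INR_n_pos. pose proof nw_lt_1.
  pose proof (ker_prim_0_0 (cw n w) (dw n w) (S (2 * n)) (Rgt_not_eq _ _ dw_pos)) as E.
  rewrite cw_minus_dw, cw_div_dw in E.
  unfold I2lim. rewrite Nat.add_1_r.
  apply Rmult_eq_reg_l with (2 * INR n); [|lra].
  rewrite E. field. lra.
Qed.

Lemma I2lim_pos : 0 < I2lim n w.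
Proof.
  pose proof INR_n_pos. pose proof nw_lt_1.
  assert (Hr : 1 < (1 + INR n * w) / (1 - INR n * w)).
  { apply Rmult_lt_reg_r with (1 - INR n * w); [lra|].
    replace ((1 + INR n * w) / (1 - INR n * w) * (1 - INR n * w)) with (1 + INR n * w)
      by (field; lra).
    nra. }
  pose proof (Rlt_pow_R1 _ (2 * n + 1) Hr ltac:(lia)).
  unfold I2lim. apply Rmult_lt_0_compat; [apply Rdiv_lt_0_compat|]; lra.
Qed.

Lemma is_lim_I1_lt : is_lim (I1 n w) p_infty (I1lim n w).
Proof.
  rewrite I1lim_eq.
  apply (is_lim_ext_loc (fun mu => RInt (ker (cw n w) (dw n w) 1 (2 * n)) 0 (mu / INR n))).
  - exists 0. intros mu Hmu. symmetry. apply I1_eq. lra.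
  - apply (is_lim_comp_div (fun M => RInt (ker (cw n w) (dw n w) 1 (2 * n)) 0 M));
      [apply is_lim_RInt_ker, dw_pos | apply INR_n_pos].
Qed.

Lemma is_lim_I2_lt : is_lim (I2 n w) p_infty (I2lim n w).
Proof.
  rewrite I2lim_eq.
  apply (is_lim_ext_loc (fun mu => RInt (ker (cw n w) (dw n w) 0 (S (2 * n))) 0 (mu / INR n))).
  - exists 0. intros mu Hmu. symmetry. apply I2_eq. lra.
  - apply (is_lim_comp_div (fun M => RInt (ker (cw n w) (dw n w) 0 (S (2 * n))) 0 M));
      [apply is_lim_RInt_ker, dw_pos | apply INR_n_pos].
Qed.

Lemma is_lim_inv_I2_lt :
  is_lim (fun mu => / (1 + INR n * I2 n w mu)) p_infty (/ (1 + INR n * I2lim n w)).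
Proof.
  pose proof INR_n_pos. pose proof I2lim_pos.
  apply is_lim_inv_1_plus; [apply is_lim_I2_lt | apply Rgt_not_eq; nra].
Qed.

Lemma inv_1_plus_I2lim_pos : 0 < / (1 + INR n * I2lim n w).
Proof. pose proof INR_n_pos. pose proof I2lim_pos. apply Rinv_0_lt_compat. nra. Qed.

Lemma is_lim_I3_lt : is_lim (I3 n w) p_infty p_infty.
Proof.
  exact (is_lim_mult_p_infty_pos (fun mu => mu) _ _ (is_lim_id p_infty) is_lim_inv_I2_lt
           inv_1_plus_I2lim_pos).
Qed.

Lemma is_lim_I4_lt : is_lim (I4 n w) p_infty (I1lim n w / (1 + INR n * I2lim n w)).
Proof.
  exact (is_lim_mult (I1 n w) _ _ (I1lim n w) _ is_lim_I1_lt is_lim_inv_I2_lt I).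
Qed.

Lemma is_lim_kfun_lt : is_lim (kfun n w) p_infty p_infty.
Proof.
  apply (is_lim_ext (fun mu => (1 + mu) / (1 + INR n * I2 n w mu)
                               + - (2 * INR n ^ 2) * I4 n w mu));
    [intros; symmetry; apply kfun_split|].
  eapply (is_lim_plus _ _ p_infty p_infty _ p_infty);
    [| apply (is_lim_scal_l _ _ _ _ is_lim_I4_lt) | reflexivity].
  refine (is_lim_mult_p_infty_pos (fun mu => 1 + mu) _ _ _ is_lim_inv_I2_lt inv_1_plus_I2lim_pos).
  apply (is_lim_plus _ _ p_infty 1 p_infty); [apply is_lim_const | apply is_lim_id | reflexivity].
Qed.

End SmallW.

Lemma I2_nonneg mu : 0 <= mu -> 0 <= I2 n w mu.
Proof.
  intros Hmu. pose proof INR_n_pos. rewrite I2_eq by exact Hmu.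
  apply RInt_ker_nonneg; [apply Rlt_le, cw_pos | apply Rdiv_le_0_compat; lra].
Qed.

Lemma I1_nonneg mu : 0 <= mu -> 0 <= I1 n w mu.
Proof.
  intros Hmu. pose proof INR_n_pos. rewrite I1_eq by exact Hmu.
  apply RInt_ker_nonneg; [apply Rlt_le, cw_pos | apply Rdiv_le_0_compat; lra].
Qed.

Lemma I1_le_I2 mu : 0 <= mu -> I1 n w mu <= INR (2 * n) / cw n w * I2 n w mu.
Proof.
  intros Hmu. pose proof INR_n_pos. rewrite I1_eq, I2_eq by exact Hmu.
  pose proof (RInt_ker_shift_bounds (cw n w) (dw n w) (2 * n) (mu / INR n) cw_pos
                ltac:(apply Rdiv_le_0_compat; lra)).
  lra.
Qed.

Lemma kfun_0 : kfun n w 0 = 1.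
Proof.
  unfold kfun, I1, I2. replace (0 / INR n) with 0 by (unfold Rdiv; ring).
  rewrite !RInt_point. unfold zero. simpl. field.
Qed.

Lemma kfun_gt mu : 0 <= mu -> - (4 * INR n ^ 2 * w) / (1 + INR n * w) < kfun n w mu.
Proof.
  intros Hmu. pose proof INR_n_pos. pose proof (I1_le_I2 mu Hmu). pose proof (I2_nonneg mu Hmu).
  set (L := INR (2 * n) / cw n w) in *.
  assert (HL : L = 2 * INR n * w / (1 + INR n * w))
    by (unfold L, cw; rewrite mult_INR; simpl; field; split; apply Rgt_not_eq; nra).
  assert (0 < L) by (rewrite HL; apply Rdiv_lt_0_compat; nra).
  replace (- (4 * INR n ^ 2 * w) / (1 + INR n * w)) with (- (2 * INR n * L))
    by (rewrite HL; field; apply Rgt_not_eq, one_plus_nw_pos).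
  unfold kfun. set (D := 1 + INR n * I2 n w mu).
  assert (HD : 0 < D) by (unfold D; nra).
  apply Rmult_lt_reg_r with D; [exact HD|].
  replace ((1 + mu - 2 * INR n ^ 2 * I1 n w mu) / D * D)
    with (1 + mu - 2 * INR n ^ 2 * I1 n w mu) by (field; lra).
  assert (0 <= 2 * INR n ^ 2 * (L * I2 n w mu - I1 n w mu))
    by (apply Rmult_le_pos; [nra | lra]).
  unfold D. nra.
Qed.

Section LargeW.

Hypothesis Hlarge : 1 / INR n <= w.

Lemma dw_nonpos : dw n w <= 0.
Proof.
  pose proof INR_n_pos as Hn0.
  apply Rmult_le_compat_l with (r := INR n) in Hlarge; [|lra].
  replace (INR n * (1 / INR n)) with 1 in Hlarge by (field; lra).
  unfold dw, Rdiv. pose proof (Rinv_0_lt_compat w Hw). nra.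
Qed.

Lemma I2_ge mu : 0 <= mu -> mu / INR n + cw n w * (mu / INR n) ^ 2 / 2 <= I2 n w mu.
Proof.
  intros Hmu. pose proof INR_n_pos. rewrite I2_eq by exact Hmu.
  apply RInt_ker_0_ge;
    [apply Rlt_le, cw_pos | apply dw_nonpos | apply Rdiv_le_0_compat; lra | lia].
Qed.

Lemma I2_ge_id mu : 0 <= mu -> mu / INR n <= I2 n w mu.
Proof.
  intros Hmu. pose proof (I2_ge mu Hmu). pose proof cw_pos.
  assert (0 <= cw n w * (mu / INR n) ^ 2) by (apply Rmult_le_pos; [lra | apply pow2_ge_0]).
  lra.
Qed.

Lemma is_lim_I2_ge : is_lim (I2 n w) p_infty p_infty.
Proof.
  apply (is_lim_le_p_loc (fun mu => mu / INR n)).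
  - exists 0. intros mu Hmu. apply I2_ge_id. lra.
  - apply (is_lim_comp_div (fun M => M)); [apply is_lim_id | apply INR_n_pos].
Qed.

Lemma is_lim_I1_div_I2_ge :
  is_lim (fun mu => I1 n w mu / I2 n w mu) p_infty (INR (2 * n) / cw n w).
Proof.
  apply (is_lim_ext_loc (fun mu =>
           RInt (ker (cw n w) (dw n w) 1 (2 * n)) 0 (mu / INR n)
           / RInt (ker (cw n w) (dw n w) 0 (S (2 * n))) 0 (mu / INR n))).
  - exists 0. intros mu Hmu. rewrite I1_eq, I2_eq by lra. reflexivity.
  - apply (is_lim_comp_div (fun M => RInt (ker (cw n w) (dw n w) 1 (2 * n)) 0 M
                                    / RInt (ker (cw n w) (dw n w) 0 (S (2 * n))) 0 M));
      [| apply INR_n_pos].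
    apply is_lim_RInt_ker_ratio; [apply cw_pos | apply dw_nonpos | lia].
Qed.

Lemma is_lim_I1_ge : is_lim (I1 n w) p_infty p_infty.
Proof.
  pose proof INR_n_pos. pose proof cw_pos.
  apply (is_lim_ext_loc (fun mu => I2 n w mu * (I1 n w mu / I2 n w mu))).
  - exists 0. intros mu Hmu. pose proof (I2_ge_id mu (Rlt_le _ _ Hmu)).
    assert (0 < mu / INR n) by (apply Rdiv_lt_0_compat; lra).
    field. lra.
  - apply (is_lim_mult_p_infty_pos _ _ _ is_lim_I2_ge is_lim_I1_div_I2_ge).
    apply Rdiv_lt_0_compat; [apply lt_0_INR; lia | apply cw_pos].
Qed.

Lemma is_lim_I4_ge : is_lim (I4 n w) p_infty (2 * w / (1 + INR n * w)).
Proof.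
  pose proof INR_n_pos as Hn0. pose proof one_plus_nw_pos.
  replace (2 * w / (1 + INR n * w)) with (INR (2 * n) / cw n w / INR n)
    by (unfold cw; rewrite mult_INR; simpl; field; repeat split; apply Rgt_not_eq; lra).
  exact (is_lim_div_1_plus (I1 n w) (I2 n w) _ _ Hn0 is_lim_I1_div_I2_ge is_lim_I2_ge).
Qed.

Lemma is_lim_1_plus_div_I2_ge :
  is_lim (fun mu => (1 + mu) / (1 + INR n * I2 n w mu)) p_infty 0.
Proof.
  pose proof INR_n_pos. pose proof cw_pos.
  apply (is_lim_div_quadratic _ (cw n w / (2 * INR n))); [apply Rdiv_lt_0_compat; lra|].
  intros mu Hmu. pose proof (I2_ge mu ltac:(lra)).
  assert (E : INR n * (mu / INR n + cw n w * (mu / INR n) ^ 2 / 2)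
              = mu + cw n w / (2 * INR n) * mu ^ 2) by (field; lra).
  assert (INR n * (mu / INR n + cw n w * (mu / INR n) ^ 2 / 2) <= INR n * I2 n w mu)
    by (apply Rmult_le_compat_l; lra).
  lra.
Qed.

Lemma is_lim_I3_ge : is_lim (I3 n w) p_infty 0.
Proof.
  pose proof INR_n_pos.
  apply (is_lim_le_le_loc (fun _ => 0) (fun mu => (1 + mu) / (1 + INR n * I2 n w mu))).
  - exists 0. intros mu Hmu. pose proof (I2_nonneg mu (Rlt_le _ _ Hmu)).
    assert (0 < / (1 + INR n * I2 n w mu)) by (apply Rinv_0_lt_compat; nra).
    unfold I3, Rdiv. split; [apply Rmult_le_pos|apply Rmult_le_compat_r]; lra.
  - apply is_lim_const.
  - apply is_lim_1_plus_div_I2_ge.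
Qed.

Lemma is_lim_kfun_ge :
  is_lim (kfun n w) p_infty (- (4 * INR n ^ 2 * w) / (1 + INR n * w)).
Proof.
  pose proof INR_n_pos.
  apply (is_lim_ext (fun mu => (1 + mu) / (1 + INR n * I2 n w mu)
                               + - (2 * INR n ^ 2) * I4 n w mu));
    [intros; symmetry; apply kfun_split|].
  replace (- (4 * INR n ^ 2 * w) / (1 + INR n * w))
    with (0 + - (2 * INR n ^ 2) * (2 * w / (1 + INR n * w))) by (field; nra).
  apply is_lim_plus';
    [apply is_lim_1_plus_div_I2_ge | apply (is_lim_scal_l _ _ _ _ is_lim_I4_ge)].
Qed.

Lemma kfun_le_1 mu : 0 <= mu -> kfun n w mu <= 1.
Proof.
  intros Hmu. pose proof INR_n_pos.
  pose proof (I2_ge_id mu Hmu). pose proof (I1_nonneg mu Hmu).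
  assert (Hmu' : mu <= INR n * I2 n w mu).
  { replace mu with (INR n * (mu / INR n)) at 1 by (field; lra).
    apply Rmult_le_compat_l; lra. }
  unfold kfun. set (D := 1 + INR n * I2 n w mu).
  apply Rmult_le_reg_r with D; [unfold D; lra|].
  replace ((1 + mu - 2 * INR n ^ 2 * I1 n w mu) / D * D)
    with (1 + mu - 2 * INR n ^ 2 * I1 n w mu) by (field; unfold D; lra).
  assert (0 <= 2 * INR n ^ 2 * I1 n w mu) by (apply Rmult_le_pos; [nra | lra]).
  unfold D. lra.
Qed.

End LargeW.

End Integrals.

Theorem lemma4p3 (n : nat) (w : R) (hn : (2 <= n)%nat) (hw : 0 < w) :
  let kset := fun y => exists mu, 0 <= mu /\ y = kfun n w mu in
  (* (i) *)
  (w < 1 / INR n -> is_lim (I1 n w) p_infty (Finite (I1lim n w))) /\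
  (1 / INR n <= w -> is_lim (I1 n w) p_infty p_infty) /\
  (* (ii) *)
  (w < 1 / INR n -> is_lim (I2 n w) p_infty (Finite (I2lim n w))) /\
  (1 / INR n <= w -> is_lim (I2 n w) p_infty p_infty) /\
  (* (iii) *)
  (w < 1 / INR n -> is_lim (I3 n w) p_infty p_infty) /\
  (1 / INR n <= w -> is_lim (I3 n w) p_infty (Finite 0)) /\
  (* (iv) *)
  (w < 1 / INR n -> is_lim (I4 n w) p_infty
                      (Finite (I1lim n w / (1 + INR n * I2lim n w)))) /\
  (1 / INR n <= w -> is_lim (I4 n w) p_infty
                      (Finite (2 * w / (1 + INR n * w)))) /\
  (* (v) *)
  (w < 1 / INR n -> is_lim (kfun n w) p_infty p_infty) /\
  (1 / INR n <= w -> is_lim (kfun n w) p_infty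
                      (Finite (- (4 * (INR n) ^ 2 * w) / (1 + INR n * w)))) /\
  (* (vi) *)
  (w < 1 / INR n -> Lub_Rbar kset = p_infty) /\
  (1 / INR n <= w -> Lub_Rbar kset = Finite 1) /\
  (* (vii) *)
  (1 / INR n <= w -> Glb_Rbar kset = Finite (- (4 * (INR n) ^ 2 * w) / (1 + INR n * w))) /\
  Rbar_le (Finite (- (4 * (INR n) ^ 2 * w) / (1 + INR n * w))) (Glb_Rbar kset).
Proof.
  intros kset. assert (hn1 : (1 <= n)%nat) by lia.
  assert (Hlow : forall mu, 0 <= mu -> - (4 * INR n ^ 2 * w) / (1 + INR n * w) <= kfun n w mu)
    by (intros; apply Rlt_le, kfun_gt; assumption).
  repeat split; try intros H.
  - apply is_lim_I1_lt; assumption.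
  - apply is_lim_I1_ge; assumption.
  - apply is_lim_I2_lt; assumption.
  - apply is_lim_I2_ge; assumption.
  - apply is_lim_I3_lt; assumption.
  - apply is_lim_I3_ge; assumption.
  - apply is_lim_I4_lt; assumption.
  - apply is_lim_I4_ge; assumption.
  - apply is_lim_kfun_lt; assumption.
  - apply is_lim_kfun_ge; assumption.
  - apply Lub_Rbar_image_p_infty, is_lim_kfun_lt; assumption.
  - rewrite <- (kfun_0 n w). apply Lub_Rbar_image_max.
    intros mu Hmu. rewrite kfun_0. apply kfun_le_1; assumption.
  - apply Glb_Rbar_image_lim; [exact Hlow | apply is_lim_kfun_ge; assumption].
  - apply Glb_Rbar_image_ge. exact Hlow.
Qed.
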